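(* Let $\mathcal C$ be a concept hierarchy and $r_2\in[0,1]$. Let $\mathcal A_1$ be the network defined below. Then for every $B\subseteq C_0$ presented at time 0 and every $c\in supp_{r_2}(B)$, the neuron $rep(c)$ fires at time $level(c)$ in $\mathcal A_1$ (that is, $\mathcal A_1$ guarantees $r_2$-firing for $\mathcal C$).
   Context: Concept hierarchies: fix positive integers $\ell_{max},n,k$. A universal set $D$ of concepts is partitioned into disjoint sets $D_0,\dots,D_{\ell_{max}}$ with $|D_0|=n$; $level(c)=\ell$ for $c\in D_\ell$. A concept hierarchy $\mathcal C$ consists of $C\subseteq D$, with $C_\ell=C\cap D_\ell$, and for each $c\in C_\ell$ with $1\le\ell\le\ell_{max}$ a set $children(c)\subseteq C_{\ell-1}$, such that $|C_{\ell_{max}}|=k$, $|children(c)|=k$ for all such $c$, and $children(c)\cap children(c')=\emptyset$ for distinct $c,c'\in C_\ell$. For $B\subseteq D_0$ and $r\in[0,1]$: $B(0)=B\cap C_0$; for $1\le\ell\le\ell_{max}$, $B(\ell)=\{c\in C_\ell:|children(c)\cap B(\ell-1)|\ge rk\}$; $supp_r(B)=\bigcup_{\ell}B(\ell)$. Network $\mathcal A_1$: neurons partitioned into layers $N_0,\dots,N_{\ell_{max}}$; no failures. Each $c\in D_0$ has a neuron $rep(c)\in N_0$ and each $c\in C$ with $level(c)\ge1$ a neuron $rep(c)\in N_{level(c)}$, all distinct. For $v\in N_\ell$, $\ell\ge1$, and $u\in N_{\ell-1}$, the edge weight $w(u,v)$ is $1$ if $v=rep(c)$ and $u=rep(c')$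 for some child $c'$ of $c$, and $0$ otherwise. Threshold $\tau=r_2k$. Input $B\subseteq C_0$ presented at time 0: layer-0 neurons in $\{rep(b):b\in B\}$ fire at time 0, other layer-0 neurons do not, and no layer-0 neuron fires at any other time. Every neuron $v$ in a layer $\ell\ge1$ does not fire at time 0 and fires at time $t\ge1$ iff $\sum_{u\in N_{\ell-1}}w(u,v)x_u(t-1)\ge\tau$, where $x_u(s)\in\{0,1\}$ indicates whether $u$ fires at time $s$. *)

From HB Require Import structures.
From mathcomp Require Import all_boot all_order all_algebra.
From mathcomp Require Import reals.
Set Implicit Arguments. Unset Strict Implicit. Unset Printing Implicit Defensive.
Import Order.TTheory GRing.Theory Num.Theory.

Definition D_ (D : finType) (level : D -> nat) (l : nat) : {set D} :=
  [set c | level c == l].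

Definition is_concept_hierarchy (D : finType) (lmax n k : nat)
    (level : D -> nat) (C : {set D}) (children : D -> {set D}) : Prop :=
  [/\ (forall c : D, level c <= lmax),
      #|D_ level 0| = n,
      #|C :&: D_ level lmax| = k,
      (forall c, c \in C -> 1 <= level c ->
          children c \subset C :&: D_ level (level c).-1
          /\ #|children c| = k) &
      (forall c c', c \in C -> c' \in C -> 1 <= level c -> level c = level c' ->
          c != c' -> [disjoint children c & children c'])].

Fixpoint Bl (D : finType) (R : realType) (level : D -> nat) (C : {set D})
    (children : D -> {set D}) (k : nat) (r : R) (B : {set D}) (l : nat)
    : {set D} :=
  match l with
  | 0 => B :&: (C :&: D_ level 0)
  | l'.+1 => [set c in C :&: D_ level l'.+1 |
               (r * k%:R <= (#|children c :&: Bl level C children k r B l'|)%:R)%R]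
  end.

Definition supp (D : finType) (R : realType) (lmax : nat) (level : D -> nat)
    (C : {set D}) (children : D -> {set D}) (k : nat) (r : R) (B : {set D})
    : {set D} :=
  \bigcup_(l < lmax.+1) Bl level C children k r B l.

Definition rep_dom (D : finType) (level : D -> nat) (C : {set D}) : {set D} :=
  D_ level 0 :|: [set c in C | 1 <= level c].

Definition is_A1_layout (D N : finType) (lmax : nat) (level : D -> nat)
    (C : {set D}) (layer : N -> nat) (rep : D -> N) : Prop :=
  [/\ (forall v : N, layer v <= lmax),
      {in rep_dom level C &, injective rep} &
      (forall c, c \in rep_dom level C -> layer (rep c) = level c)].

Definition weight (D N : finType) (level : D -> nat) (C : {set D})
    (children : D -> {set D}) (rep : D -> N) (u v : N) : nat :=
  [exists c in C, [&& 1 <= level c, v == rep c &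
                      [exists c' in children c, u == rep c']]].

Fixpoint fires (D N : finType) (R : realType) (level : D -> nat) (C : {set D})
    (children : D -> {set D}) (layer : N -> nat) (rep : D -> N)
    (k : nat) (r2 : R) (B : {set D}) (t : nat) (v : N) : bool :=
  match t with
  | 0 => (layer v == 0) && [exists b in B, v == rep b]
  | t'.+1 => (layer v != 0) &&
      (r2 * k%:R <=
        (\sum_(u : N | layer u == (layer v).-1)
           weight level C children rep u v *
           fires level C children layer rep k r2 B t' u)%:R)%R
  end.

From Pilot Require Import Defs.
From HB Require Import structures.
From mathcomp Require Import all_boot all_order all_algebra.
From mathcomp Require Import reals.
Import Order.TTheory GRing.Theory Num.Theory.

(* A concept in [B(l+1)] has at least [r2 k] children
   in [B(l)]; by induction their representatives fire at time [l], each sends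
   weight 1 to [rep c], and they are distinct neurons because [rep] is
   injective.  So the input of [rep c] at time [l] reaches the threshold. *)

Lemma card_le_sum_in (T U : finType) (S : {set T}) (g : T -> U) (P : pred U)
    (F : U -> nat) :
  {in S &, injective g} -> (forall x, x \in S -> P (g x) && (0 < F (g x))) ->
  #|S| <= \sum_(u | P u) F u.
Proof.
move=> g_inj SPF; rewrite -(card_in_imset g_inj) -sum1_card.
apply: (@leq_trans (\sum_(u | P u && (u \in g @: S)) F u)).
  rewrite (eq_bigl (fun u => P u && (u \in g @: S))); last first.
    by move=> u; apply/esym/andb_idl => /imsetP[x /SPF /andP[Pgx _] ->].
  by apply: leq_sum => _ /andP[_ /imsetP[x /SPF /andP[_ ?] ->]].
by rewrite [leqRHS](bigID (mem (g @: S))) leq_addr.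
Qed.

Section NetworkA1.

Context {R : realType} {D N : finType} {level : D -> nat} {C : {set D}}.
Context {children : D -> {set D}} {layer : N -> nat} {rep : D -> N}.
Context {k : nat} {r2 : R} {B : {set D}}.

Hypothesis rep_inj : {in rep_dom level C &, injective rep}.
Hypothesis layer_rep : forall c, c \in rep_dom level C -> layer (rep c) = level c.

Local Notation Bl := (Bl level C children k r2 B).
Local Notation fires := (fires level C children layer rep k r2 B).
Local Notation weight := (weight level C children rep).

Lemma mem_Bl {l c} : c \in Bl l -> c \in C /\ level c = l.
Proof.
case: l => [|l] /=; rewrite !inE; first by case/and3P=> _ -> /eqP.
by case/andP=> /andP[-> /eqP].
Qed.

Lemma mem_rep_dom c : c \in C -> c \in rep_dom level C.
Proof. by rewrite !inE => ->; case: (level c). Qed.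

Lemma weight_child c x :
  c \in C -> 0 < level c -> x \in children c -> weight (rep x) (rep c) = 1.
Proof.
move=> cC lc_gt0 xc; rewrite /Defs.weight; case: existsP => // -[].
by exists c; rewrite cC lc_gt0 eqxx /=; apply/existsP; exists x; rewrite xc eqxx.
Qed.

Lemma fires_Bl l c : c \in Bl l -> fires l (rep c).
Proof.
elim: l c => [|l IH] c cBl; have [cC lc] := mem_Bl cBl;
  rewrite /= layer_rep ?mem_rep_dom // lc /=.
  by apply/existsP; exists c; rewrite eqxx andbT; move: cBl; rewrite inE => /andP[].
move: cBl; rewrite inE => /andP[_ /le_trans]; apply; rewrite ler_nat.
apply: card_le_sum_in => [x y /setIP[_ /mem_Bl[xC _]] /setIP[_ /mem_Bl[yC _]]|].
  by apply: rep_inj; apply: mem_rep_dom.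
move=> x /setIP[xc xBl]; have [xC lx] := mem_Bl xBl.
by rewrite layer_rep ?mem_rep_dom // lx eqxx weight_child ?lc // IH.
Qed.

Lemma fires_supp lmax c :
  c \in supp lmax level C children k r2 B -> fires (level c) (rep c).
Proof. by case/bigcupP=> l _ cBl; have [_ ->] := mem_Bl cBl; exact: fires_Bl. Qed.

End NetworkA1.

Theorem theorem6p1 (R : realType) (D N : finType) (lmax n k : nat)
    (level : D -> nat) (C : {set D}) (children : D -> {set D})
    (layer : N -> nat) (rep : D -> N) (r2 : R) :
  0 < lmax -> 0 < n -> 0 < k ->
  is_concept_hierarchy lmax n k level C children ->
  (0 <= r2 <= 1)%R ->
  is_A1_layout lmax level C layer rep ->
  forall B : {set D}, B \subset C :&: D_ level 0 ->
  forall c, c \in supp lmax level C children k r2 B ->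
    fires level C children layer rep k r2 B (level c) (rep c).
Proof.
move=> _ _ _ _ _ [_ rep_inj layer_rep] B _ c.
exact: (fires_supp rep_inj layer_rep).
Qed.
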